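(* Fix the following data: an integer $N_{\text{t}}\ge 2$, constants $\tilde P>0$, $H>0$, $y_{\min}>0$, $v_{\text{A,max}}>0$, $\Delta T>0$, $0<w_{\min}\le w_{\max}\le 1$, $\varepsilon_{\text{out}}\in(0,1)$, and a point $\hat{\mathbf q}_{n-1}\in\mathbb R^2$. Let $\breve{\mathbf q}_n=[\breve x_n,\breve y_n]^T\in\mathbb R^2$ and $w_n$ satisfy $\|\breve{\mathbf q}_n-\hat{\mathbf q}_{n-1}\|\le v_{\text{A,max}}\Delta T$, $\breve y_n\ge y_{\min}$, and $w_{\min}\le w_n\le w_{\max}$, and, for these fixed $\breve{\mathbf q}_n$ and $w_n$, let $\breve{\boldsymbol\Lambda}_n$ and $\hat{\boldsymbol\Lambda}_n$ be the associated $2\times 2$ positive-definite covariance matrices (which do not depend on $\boldsymbol\gamma_n$). Then the function $$\boldsymbol\gamma_n=[\breve\gamma_n,\hat\gamma_n]^T\;\longmapsto\;\tilde\varkappa(\breve{\mathbf q}_n,w_n,\boldsymbol\gamma_n)=\max\bigl(\zeta(\breve\gamma_n;\breve{\boldsymbol\Lambda}_n),\,\zeta(\hat\gamma_n;\hat{\boldsymbol\Lambda}_n)\bigr)-\varepsilon_{\text{out}},$$ defined on $\{\boldsymbol\gamma_n:\ \mathbf 0\prec\boldsymbol\gamma_n\prec\gamma_{\max}\mathbf 1_2\}$ with $\gamma_{\max}=\tilde P N_{\text{t}}/(y_{\min}^2+H^2)$, is monotonically nondecreasing in $\boldsymbol\gamma_n$ (with respect to the componentwise order).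
   Context: Notation: $\prec$ is componentwise strict inequality, $\mathbf 0$ and $\mathbf 1_2$ are the $2\times1$ zero and all-ones vectors, $\mathrm{erf}$ is the error function. Set $M=\frac{N_{\text{t}}\pi^2(N_{\text{t}}^2-1)}{24}$ and $r^2=\breve x_n^2+\breve y_n^2$. For $\gamma>0$ define $D(\gamma)=r^6\gamma+\breve x_n^2\breve y_n^2\tilde P M$, $Y_0=\frac{\breve x_n\breve y_n^3\tilde P M}{D(\gamma)}$, $Y_1=\frac{(\tilde P N_{\text{t}}-H^2\gamma)\,r^6}{D(\gamma)}$, $Y_2=-\frac{r^8\,(r^4\gamma^2+\tilde P M\breve y_n^2\gamma)}{D(\gamma)^2}$, and for $x\in\mathbb R$: $x_{\text U}=-\breve x_n+\sqrt{-Y_1/Y_2}$, $x_{\text L}=-\breve x_n-\sqrt{-Y_1/Y_2}$, $y_{\text U}(x)=-\breve y_n+Y_0(x+\breve x_n)+\sqrt{Y_1+Y_2(x+\breve x_n)^2}$, $y_{\text L}(x)=-\breve y_n+Y_0(x+\breve x_n)-\sqrt{Y_1+Y_2(x+\breve x_n)^2}$. For a positive-definite matrix $\boldsymbol\Lambda=\begin{bmatrix}\Lambda_{\text x}^2&\Lambda_{\text{xy}}^2\\ \Lambda_{\text{xy}}^2&\Lambda_{\text y}^2\end{bmatrix}$ define $\chi_{\text U}(x)=\frac{\Lambda_{\text x}^2 y_{\text U}(x)-\Lambda_{\text{xy}}^2 x}{\sqrt{2|\det\boldsymbol\Lambda|}\,\Lambda_{\text x}}$, $\chi_{\text L}(x)=\frac{\Lambda_{\text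 x}^2 y_{\text L}(x)-\Lambda_{\text{xy}}^2 x}{\sqrt{2|\det\boldsymbol\Lambda|}\,\Lambda_{\text x}}$, $\chi(x)=\frac{\mathrm{erf}(\chi_{\text U}(x))-\mathrm{erf}(\chi_{\text L}(x))}{2}$ if $x\in[x_{\text L},x_{\text U}]$ and $\chi(x)=0$ otherwise, and the approximated outage probability $\zeta(\gamma;\boldsymbol\Lambda)=1-\mathbb E_{x}[\chi(x)]$, where $x\sim\mathcal N(0,\Lambda_{\text x}^2)$. (In the paper, $\zeta(\breve\gamma_n;\breve{\boldsymbol\Lambda}_n)$ and $\zeta(\hat\gamma_n;\hat{\boldsymbol\Lambda}_n)$ are the approximated outage probabilities at the prediction and estimation stages; $\breve{\boldsymbol\Lambda}_n$ and $\hat{\boldsymbol\Lambda}_n$ are the position blocks (entries $(1,1),(1,3),(3,1),(3,3)$) of the EKF prediction and estimation MSE matrices, and in both stages the formulas above use the predicted position $(\breve x_n,\breve y_n)$.) *)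

From Stdlib Require Import Reals Lra.
From Coquelicot Require Import Coquelicot.
Open Scope R_scope.

Definition erf (z : R) : R :=
  2 / sqrt PI * RInt (fun t => exp (- t ^ 2)) 0 z.

Definition Mconst (Nt : nat) : R := INR Nt * PI ^ 2 * (INR Nt ^ 2 - 1) / 24.

Section Zeta.
Variables (Nt : nat) (Pt H xb yb : R).

Definition r2 : R := xb ^ 2 + yb ^ 2.
Definition Dg (g : R) : R := r2 ^ 3 * g + xb ^ 2 * yb ^ 2 * Pt * Mconst Nt.
Definition Y0 (g : R) : R := xb * yb ^ 3 * Pt * Mconst Nt / Dg g.
Definition Y1 (g : R) : R := (Pt * INR Nt - H ^ 2 * g) * r2 ^ 3 / Dg g.
Definition Y2 (g : R) : R :=
  - (r2 ^ 4 * (r2 ^ 2 * g ^ 2 + Pt * Mconst Nt * yb ^ 2 * g)) / (Dg g) ^ 2.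
Definition xU (g : R) : R := - xb + sqrt (- Y1 g / Y2 g).
Definition xL (g : R) : R := - xb - sqrt (- Y1 g / Y2 g).
Definition yU (g x : R) : R :=
  - yb + Y0 g * (x + xb) + sqrt (Y1 g + Y2 g * (x + xb) ^ 2).
Definition yL (g x : R) : R :=
  - yb + Y0 g * (x + xb) - sqrt (Y1 g + Y2 g * (x + xb) ^ 2).

(* Lambda = [[lx2, lxy2],[lxy2, ly2]] (entries Lambda_x^2, Lambda_xy^2, Lambda_y^2);
   Lambda_x = sqrt lx2. *)
Definition chiU (lx2 lxy2 ly2 g x : R) : R :=
  (lx2 * yU g x - lxy2 * x) / (sqrt (2 * Rabs (lx2 * ly2 - lxy2 ^ 2)) * sqrt lx2).
Definition chiL (lx2 lxy2 ly2 g x : R) : R :=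
  (lx2 * yL g x - lxy2 * x) / (sqrt (2 * Rabs (lx2 * ly2 - lxy2 ^ 2)) * sqrt lx2).
Definition chi (lx2 lxy2 ly2 g x : R) : R :=
  if Rle_dec (xL g) x then
    if Rle_dec x (xU g) then
      (erf (chiU lx2 lxy2 ly2 g x) - erf (chiL lx2 lxy2 ly2 g x)) / 2
    else 0
  else 0.

Definition gauss_pdf (v x : R) : R := exp (- x ^ 2 / (2 * v)) / sqrt (2 * PI * v).

Definition zeta (g lx2 lxy2 ly2 : R) : R :=
  1 - RInt_gen (fun x => chi lx2 lxy2 ly2 g x * gauss_pdf lx2 x)
        (Rbar_locally m_infty) (Rbar_locally p_infty).

End Zeta.

Definition posdef2 (a b c : R) : Prop := 0 < a /\ 0 < a * c - b ^ 2.

Definition kappa_tilde (Nt : nat) (Pt H xb yb eps : R)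
  (Lb Lh : R * R * R) (gb gh : R) : R :=
  let '(ab, bb, cb) := Lb in
  let '(ah, bh, ch) := Lh in
  Rmax (zeta Nt Pt H xb yb gb ab bb cb) (zeta Nt Pt H xb yb gh ah bh ch) - eps.

From Pilot Require Import Defs.
From Stdlib Require Import Reals Lra Psatz.
From Coquelicot Require Import Coquelicot.
Open Scope R_scope.

(* The region over which [chi] integrates the Gaussian shrinks as [gamma] grows.  In
   coordinates shifted by the predicted position it is the sublevel set [{F_gamma <= 0}]
   of the quadratic form [F_gamma = D(gamma) ((y - Y0 x)^2 - Y1 - Y2 x^2)], which is
   affine and nondecreasing in [gamma]; [[xL, xU]] and [[yL x, yU x]] are the projection
   and the vertical sections of that set.  Hence [chi], the conditional Gaussian mass of
   the section, decreases pointwise, so its expectation decreases and each [zeta], hence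
   their maximum, increases. *)

Lemma Mconst_ge0 (Nt : nat) : 0 <= Mconst Nt.
Proof.
  unfold Mconst.
  destruct Nt as [|n]; [simpl; lra|].
  assert (H1 : 1 <= INR (S n)) by (apply (le_INR 1); lia).
  assert (0 <= PI ^ 2) by apply pow2_ge_0.
  assert (0 <= INR (S n) ^ 2 - 1) by nra.
  assert (0 <= INR (S n) * PI ^ 2) by nra.
  nra.
Qed.

Lemma sqr_le_iff (t q : R) : t ^ 2 <= q <-> 0 <= q /\ - sqrt q <= t <= sqrt q.
Proof.
  split.
  - intro Htq.
    assert (Hq : 0 <= q) by nra.
    assert (Habs : Rabs t <= sqrt q).
    { rewrite <- sqrt_Rsqr_abs. apply sqrt_le_1_alt. rewrite Rsqr_pow2. exact Htq. }
    split; [exact Hq|]. apply Rabs_le_between. exact Habs.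
  - intros [Hq Ht].
    rewrite <- (sqrt_sqrt q Hq).
    assert (0 <= sqrt q) by apply sqrt_pos.
    nra.
Qed.

Section Coverage.
Variables (Nt : nat) (Pt H xb yb : R).
Hypothesis Pt_ge0 : 0 <= Pt.
Hypothesis r2_gt0 : 0 < r2 xb yb.

Local Notation D := (Dg Nt Pt xb yb).
Local Notation Y0 := (Defs.Y0 Nt Pt xb yb).
Local Notation Y1 := (Defs.Y1 Nt Pt H xb yb).
Local Notation Y2 := (Defs.Y2 Nt Pt xb yb).
Local Notation disc g u := (Y1 g + Y2 g * u ^ 2).
Local Notation xL := (Defs.xL Nt Pt H xb yb).
Local Notation xU := (Defs.xU Nt Pt H xb yb).
Local Notation yL := (Defs.yL Nt Pt H xb yb).
Local Notation yU := (Defs.yU Nt Pt H xb yb).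

Definition admissible (g : R) : Prop := 0 < g /\ g * H ^ 2 < Pt * INR Nt.

(* [Dg g * ((v - Y0 g * u) ^ 2 - Y1 g - Y2 g * u ^ 2)] (see [cover_form_Dg]), expanded so
   that the monotonicity in [g] is visible. *)
Definition cover_form (g u v : R) : R :=
  g * r2 xb yb ^ 3 * (u ^ 2 + v ^ 2 + H ^ 2)
  + Pt * Mconst Nt * yb ^ 2 * (xb * v - yb * u) ^ 2 - Pt * INR Nt * r2 xb yb ^ 3.

Lemma Dg_gt0 (g : R) : 0 < g -> 0 < D g.
Proof.
  intro Hg. unfold Dg.
  assert (0 < r2 xb yb ^ 3) by (apply pow_lt; lra).
  assert (0 <= Pt * Mconst Nt) by (apply Rmult_le_pos; [lra | apply Mconst_ge0]).
  assert (0 <= xb ^ 2 * yb ^ 2) by (apply Rmult_le_pos; apply pow2_ge_0).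
  nra.
Qed.

Lemma Y2_lt0 (g : R) : 0 < g -> Y2 g < 0.
Proof.
  intro Hg. unfold Defs.Y2.
  assert (0 < r2 xb yb ^ 4) by (apply pow_lt; lra).
  assert (0 < r2 xb yb ^ 2 * g ^ 2) by (apply Rmult_lt_0_compat; apply pow_lt; lra).
  assert (0 <= Pt * Mconst Nt) by (apply Rmult_le_pos; [lra | apply Mconst_ge0]).
  assert (0 <= Pt * Mconst Nt * yb ^ 2 * g)
    by (apply Rmult_le_pos; [apply Rmult_le_pos; [|apply pow2_ge_0]|]; lra).
  assert (0 < D g ^ 2) by (apply pow_lt; apply Dg_gt0; exact Hg).
  apply Rdiv_neg_pos; nra.
Qed.

Lemma Y1_gt0 (g : R) : admissible g -> 0 < Y1 g.
Proof.
  intros [Hg HgH]. unfold Defs.Y1.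
  assert (0 < r2 xb yb ^ 3) by (apply pow_lt; lra).
  apply Rdiv_lt_0_compat; [nra | apply Dg_gt0, Hg].
Qed.

Lemma cover_form_Dg (g u v : R) : 0 < g ->
  cover_form g u v / D g = (v - Y0 g * u) ^ 2 - disc g u.
Proof.
  intro Hg. assert (HD := Dg_gt0 g Hg).
  unfold cover_form, Defs.Y0, Defs.Y1, Defs.Y2.
  field_simplify_eq; [| lra].
  unfold Dg, r2. ring.
Qed.

Lemma cover_form_monotone (g g' u v : R) : g <= g' ->
  cover_form g u v <= cover_form g' u v.
Proof.
  intro Hgg. unfold cover_form.
  assert (0 < r2 xb yb ^ 3) by (apply pow_lt; lra).
  assert (0 <= u ^ 2) by apply pow2_ge_0.
  assert (0 <= v ^ 2) by apply pow2_ge_0.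
  assert (0 <= H ^ 2) by apply pow2_ge_0.
  assert (0 <= (g' - g) * r2 xb yb ^ 3 * (u ^ 2 + v ^ 2 + H ^ 2))
    by (apply Rmult_le_pos; [apply Rmult_le_pos|]; lra).
  nra.
Qed.

Lemma xrange_iff (g x : R) : admissible g ->
  xL g <= x <= xU g <-> 0 <= disc g (x + xb).
Proof.
  intro Hg.
  assert (H1 := Y1_gt0 g Hg). assert (H2 := Y2_lt0 g (proj1 Hg)).
  set (q := - Y1 g / Y2 g).
  assert (Hdisc : disc g (x + xb) = - Y2 g * (q - (x + xb) ^ 2)) by (unfold q; field; lra).
  assert (Hsq : 0 <= disc g (x + xb) <-> (x + xb) ^ 2 <= q).
  { rewrite Hdisc. split; intro K; [|apply Rmult_le_pos; lra].
    apply Rmult_le_reg_l with (- Y2 g); lra. }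
  rewrite Hsq, sqr_le_iff. unfold Defs.xL, Defs.xU. fold q.
  assert (Y1 g / Y2 g < 0) by (apply Rdiv_pos_neg; lra).
  assert (0 < q) by (unfold q; rewrite Rdiv_opp_l; lra).
  lra.
Qed.

Lemma section_iff (g x y : R) : 0 < g ->
  cover_form g (x + xb) (y + yb) <= 0 <->
  0 <= disc g (x + xb) /\ yL g x <= y <= yU g x.
Proof.
  intro Hg. assert (HD := Dg_gt0 g Hg).
  assert (Hsign : cover_form g (x + xb) (y + yb) <= 0 <->
                  cover_form g (x + xb) (y + yb) / D g <= 0).
  { split; intro K.
    - apply Rmult_le_0_r; [exact K | left; apply Rinv_0_lt_compat, HD].
    - apply Rmult_le_reg_r with (/ D g); [apply Rinv_0_lt_compat, HD|]. lra. }
  rewrite Hsign, cover_form_Dg by exact Hg.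
  assert (Hsq : (y + yb - Y0 g * (x + xb)) ^ 2 - disc g (x + xb) <= 0 <->
                (y + yb - Y0 g * (x + xb)) ^ 2 <= disc g (x + xb)) by lra.
  rewrite Hsq, sqr_le_iff. unfold Defs.yL, Defs.yU. lra.
Qed.

Lemma yL_le_yU (g x : R) : yL g x <= yU g x.
Proof.
  unfold Defs.yL, Defs.yU. assert (0 <= sqrt (disc g (x + xb))) by apply sqrt_pos. lra.
Qed.

Lemma section_nested (g g' x : R) : admissible g -> admissible g' -> g <= g' ->
  xL g' <= x <= xU g' ->
  (xL g <= x <= xU g)
  /\ yL g x <= yL g' x
  /\ yU g' x <= yU g x.
Proof.
  intros Hg Hg' Hgg Hx.
  assert (Hshrink : forall y, yL g' x <= y <= yU g' x ->
            0 <= disc g (x + xb) /\ yL g x <= y <= yU g x).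
  { intros y Hy. apply section_iff; [apply Hg|].
    apply Rle_trans with (cover_form g' (x + xb) (y + yb)); [apply cover_form_monotone, Hgg|].
    apply section_iff; [apply Hg'|]. split; [apply xrange_iff; assumption | exact Hy]. }
  assert (HLU : yL g' x <= yU g' x)
    by (unfold yL, yU; assert (0 <= sqrt (disc g' (x + xb))) by apply sqrt_pos; lra).
  destruct (Hshrink _ (conj (Rle_refl _) HLU)) as [Hdisc HL].
  destruct (Hshrink _ (conj HLU (Rle_refl _))) as [_ HU].
  split; [apply xrange_iff; assumption | lra].
Qed.

Lemma xL_le_xU (g : R) : xL g <= xU g.
Proof.
  unfold Defs.xL, Defs.xU. assert (0 <= sqrt (- Y1 g / Y2 g)) by apply sqrt_pos. lra.
Qed.

End Coverage.

Lemma ex_RInt_gauss_kernel (a b : R) : ex_RInt (fun t => exp (- t ^ 2)) a b.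
Proof.
  apply (ex_RInt_continuous (V := R_CompleteNormedModule)). intros t _.
  apply (@ex_derive_continuous R_AbsRing R_NormedModule). auto_derive. easy.
Qed.

Lemma erf_le (a b : R) : a <= b -> erf a <= erf b.
Proof.
  intro Hab. unfold erf.
  rewrite <- (RInt_Chasles _ 0 a b) by apply ex_RInt_gauss_kernel.
  assert (0 <= RInt (fun t => exp (- t ^ 2)) a b).
  { apply RInt_ge_0; [exact Hab | apply ex_RInt_gauss_kernel | intros; left; apply exp_pos]. }
  assert (0 < 2 / sqrt PI) by (apply Rdiv_lt_0_compat, sqrt_lt_R0, PI_RGT_0; lra).
  change (plus ?x ?y) with (x + y). nra.
Qed.

Lemma ex_derive_erf (z : R) : ex_derive erf z.
Proof.
  unfold erf. auto_derive. repeat split.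
  - exact (ex_RInt_gauss_kernel 0 z).
  - apply filter_forall. intro t. apply derivable_continuous_pt. reg.
Qed.

Lemma continuous_erf (z : R) : continuous erf z.
Proof. apply (@ex_derive_continuous R_AbsRing R_NormedModule), ex_derive_erf. Qed.

Lemma is_RInt_zero_outside (f : R -> R) (a b c d : R) :
  a <= c -> c <= d -> d <= b ->
  (forall x, x < c \/ d < x -> f x = 0) -> ex_RInt f c d ->
  is_RInt f a b (RInt f c d).
Proof.
  intros Hac Hcd Hdb Hf Hex.
  assert (Hzero : forall p q, p <= q -> (forall x, p < x < q -> f x = 0) -> is_RInt f p q 0).
  { intros p q Hpq Hpqf.
    apply (is_RInt_ext (fun _ => 0)).
    - intros x Hx. rewrite Rmin_left, Rmax_right in Hx by lra. symmetry. apply Hpqf, Hx.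
    - assert (Hc := is_RInt_const (V := R_NormedModule) p q 0).
      rewrite (scal_zero_r (V := R_ModuleSpace)) in Hc. exact Hc. }
  assert (Hl : is_RInt f a c 0) by (apply Hzero; [lra | intros; apply Hf; lra]).
  assert (Hr : is_RInt f d b 0) by (apply Hzero; [lra | intros; apply Hf; lra]).
  assert (Hcb := is_RInt_Chasles f c d b _ _ (RInt_correct f c d Hex) Hr).
  assert (Hab := is_RInt_Chasles f a c b _ _ Hl Hcb).
  rewrite (plus_zero_l (G := R_AbelianMonoid)), (plus_zero_r (G := R_AbelianMonoid)) in Hab.
  exact Hab.
Qed.

Lemma RInt_gen_zero_outside (f : R -> R) (c d : R) : c <= d ->
  (forall x, x < c \/ d < x -> f x = 0) -> ex_RInt f c d ->
  RInt_gen f (Rbar_locally m_infty) (Rbar_locally p_infty) = RInt f c d.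
Proof.
  intros Hcd Hf Hex. apply is_RInt_gen_unique.
  intros P HP. simpl.
  apply (Filter_prod _ _ _ (fun a => a < c) (fun b => d < b)); [exists c; auto | exists d; auto |].
  intros a b Ha Hb. exists (RInt f c d). split.
  - simpl. apply is_RInt_zero_outside; auto; lra.
  - apply locally_singleton, HP.
Qed.

Section Outage.
Variables (Nt : nat) (Pt H xb yb a b c : R).
Hypothesis Pt_ge0 : 0 <= Pt.
Hypothesis r2_gt0 : 0 < r2 xb yb.
Hypothesis Lambda_posdef : posdef2 a b c.

Local Notation xL := (Defs.xL Nt Pt H xb yb).
Local Notation xU := (Defs.xU Nt Pt H xb yb).
Local Notation yL := (Defs.yL Nt Pt H xb yb).
Local Notation yU := (Defs.yU Nt Pt H xb yb).
Local Notation chiL := (Defs.chiL Nt Pt H xb yb a b c).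
Local Notation chiU := (Defs.chiU Nt Pt H xb yb a b c).
Local Notation chi := (Defs.chi Nt Pt H xb yb a b c).
Local Notation admissible := (admissible Nt Pt H).
Local Notation zeta g := (Defs.zeta Nt Pt H xb yb g a b c).
Local Notation section_nested := (section_nested Nt Pt H xb yb Pt_ge0 r2_gt0).
Local Notation xL_le_xU := (xL_le_xU Nt Pt H xb yb).

(* If [(x, y) ~ N(0, [[a, b], [b, c]])] then [y] given [x] is
   [N(b x / a, (a c - b ^ 2) / a)]; [cond_score y x] is [y] standardised for this law
   and divided by [sqrt 2], so that [chiU g x = cond_score (yU g x) x]. *)
Definition cond_score (y x : R) : R :=
  (a * y - b * x) / (sqrt (2 * Rabs (a * c - b ^ 2)) * sqrt a).

Lemma cond_score_le (y1 y2 x : R) : y1 <= y2 -> cond_score y1 x <= cond_score y2 x.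
Proof.
  intro Hy. destruct Lambda_posdef as [Ha Hdet].
  assert (0 < sqrt (2 * Rabs (a * c - b ^ 2)) * sqrt a).
  { apply Rmult_lt_0_compat; apply sqrt_lt_R0; [rewrite Rabs_right|]; lra. }
  unfold cond_score, Rdiv. apply Rmult_le_compat_r; [left; apply Rinv_0_lt_compat; lra | nra].
Qed.

Definition section_prob (g x : R) : R := (erf (chiU g x) - erf (chiL g x)) / 2.

Lemma section_prob_ge0 (g x : R) : 0 <= section_prob g x.
Proof.
  unfold section_prob.
  assert (erf (chiL g x) <= erf (chiU g x)); [|lra].
  apply erf_le, cond_score_le, yL_le_yU.
Qed.

Lemma chi_ge0 (g x : R) : 0 <= chi g x.
Proof.
  unfold Defs.chi. destruct (Rle_dec _ _); [destruct (Rle_dec _ _)|]; try lra.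
  apply section_prob_ge0.
Qed.

Lemma chi_antitone (g g' x : R) : admissible g -> admissible g' -> g <= g' ->
  chi g' x <= chi g x.
Proof.
  intros Hg Hg' Hgg.
  unfold Defs.chi at 1.
  destruct (Rle_dec _ _) as [HL'|]; [destruct (Rle_dec _ _) as [HU'|]|]; try apply chi_ge0.
  destruct (section_nested g g' x Hg Hg' Hgg (conj HL' HU'))
    as ([HL HU] & HyL & HyU).
  unfold Defs.chi. destruct (Rle_dec _ _); [destruct (Rle_dec _ _)|]; try lra.
  assert (erf (chiU g' x) <= erf (chiU g x)) by apply erf_le, cond_score_le, HyU.
  assert (erf (chiL g x) <= erf (chiL g' x)) by apply erf_le, cond_score_le, HyL.
  lra.
Qed.

Lemma continuous_section_prob_pdf (g x : R) :
  continuous (fun t => section_prob g t * gauss_pdf a t) x.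
Proof.
  destruct Lambda_posdef as [Ha _].
  assert (Hpoly : forall p : R -> R, (forall t, ex_derive p t) -> continuous p x)
    by (intros p Hp; apply (@ex_derive_continuous R_AbsRing R_NormedModule), Hp).
  assert (Hscore : forall y : R -> R, continuous y x ->
            continuous (fun t => erf (cond_score (y t) t)) x).
  { intros y Hy. apply (continuous_comp _ erf); [|apply continuous_erf].
    unfold cond_score.
    apply (continuous_mult (fun t => a * y t - b * t)); [|apply continuous_const].
    apply (continuous_minus (fun t => a * y t)); [|apply Hpoly; intro; auto_derive; easy].
    apply (continuous_mult (fun _ => a)); [apply continuous_const | exact Hy]. }
  assert (Hdisc : continuous
            (fun t => sqrt (Y1 Nt Pt H xb yb g + Y2 Nt Pt xb yb g * (t + xb) ^ 2)) x)
    by (apply continuous_sqrt_comp, Hpoly; intro; auto_derive; easy).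
  apply (continuous_mult (section_prob g)).
  - unfold section_prob. apply (continuous_mult (fun t => erf (chiU g t) - erf (chiL g t)));
      [|apply continuous_const].
    apply (continuous_minus (fun t => erf (chiU g t))); apply Hscore; unfold Defs.yU, Defs.yL.
    + apply (continuous_plus (fun t => - yb + Y0 Nt Pt xb yb g * (t + xb))); [|exact Hdisc].
      apply Hpoly; intro; auto_derive; easy.
    + apply (continuous_minus (fun t => - yb + Y0 Nt Pt xb yb g * (t + xb))); [|exact Hdisc].
      apply Hpoly; intro; auto_derive; easy.
  - apply Hpoly. intro t. unfold gauss_pdf. auto_derive.
    assert (0 < sqrt (2 * PI * a)) by (apply sqrt_lt_R0; pose proof PI_RGT_0; nra).
    repeat split; lra.
Qed.

Lemma chi_pdf_zero_outside (g x : R) : x < xL g \/ xU g < x -> chi g x * gauss_pdf a x = 0.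
Proof.
  intro Hx. unfold Defs.chi. destruct (Rle_dec _ _); [destruct (Rle_dec _ _)|]; try lra; ring.
Qed.

Lemma ex_RInt_chi_pdf (g : R) : ex_RInt (fun x => chi g x * gauss_pdf a x) (xL g) (xU g).
Proof.
  assert (Hle := xL_le_xU g).
  apply (ex_RInt_ext (fun x => section_prob g x * gauss_pdf a x)).
  - intros x Hx. rewrite Rmin_left, Rmax_right in Hx by lra.
    unfold Defs.chi. destruct (Rle_dec _ _); [destruct (Rle_dec _ _)|]; try lra. reflexivity.
  - apply (ex_RInt_continuous (V := R_CompleteNormedModule)). intros x _.
    apply continuous_section_prob_pdf.
Qed.

Lemma zeta_RInt (g : R) :
  zeta g = 1 - RInt (fun x => chi g x * gauss_pdf a x) (xL g) (xU g).
Proof.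
  unfold Defs.zeta. do 2 f_equal.
  apply RInt_gen_zero_outside;
    [apply xL_le_xU | apply chi_pdf_zero_outside | apply ex_RInt_chi_pdf].
Qed.

Lemma zeta_monotone (g g' : R) : admissible g -> admissible g' -> g <= g' ->
  zeta g <= zeta g'.
Proof.
  intros Hg Hg' Hgg. rewrite !zeta_RInt.
  destruct (section_nested g g' (xL g') Hg Hg' Hgg (conj (Rle_refl _) (xL_le_xU g')))
    as ([HL _] & _).
  destruct (section_nested g g' (xU g') Hg Hg' Hgg (conj (xL_le_xU g') (Rle_refl _)))
    as ([_ HU] & _).
  assert (Hg'int : is_RInt (fun x => chi g' x * gauss_pdf a x) (xL g) (xU g)
                     (RInt (fun x => chi g' x * gauss_pdf a x) (xL g') (xU g'))).
  { apply is_RInt_zero_outside; [lra | apply xL_le_xU | lra | |].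
    - apply chi_pdf_zero_outside.
    - apply ex_RInt_chi_pdf. }
  rewrite <- (is_RInt_unique (V := R_CompleteNormedModule) _ _ _ _ Hg'int).
  assert (RInt (fun x => chi g' x * gauss_pdf a x) (xL g) (xU g)
          <= RInt (fun x => chi g x * gauss_pdf a x) (xL g) (xU g)); [|lra].
  apply RInt_le; [apply xL_le_xU | eexists; exact Hg'int | apply ex_RInt_chi_pdf |].
  intros x _. apply Rmult_le_compat_r; [|apply chi_antitone; assumption].
  unfold gauss_pdf. destruct Lambda_posdef as [Ha _].
  apply Rdiv_le_0_compat; [left; apply exp_pos | apply sqrt_lt_R0; pose proof PI_RGT_0; nra].
Qed.

End Outage.

Theorem proposition2
  (Nt : nat) (Pt H ymin vAmax dT wmin wmax eps : R) (qprev : R * R)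
  (xb yb wn : R) (Lb Lh : R * R * R) :
  (2 <= Nt)%nat -> 0 < Pt -> 0 < H -> 0 < ymin -> 0 < vAmax -> 0 < dT ->
  0 < wmin -> wmin <= wmax -> wmax <= 1 -> 0 < eps < 1 ->
  sqrt ((xb - fst qprev) ^ 2 + (yb - snd qprev) ^ 2) <= vAmax * dT ->
  ymin <= yb -> wmin <= wn <= wmax ->
  (let '(a, b, c) := Lb in posdef2 a b c) ->
  (let '(a, b, c) := Lh in posdef2 a b c) ->
  let gmax := Pt * INR Nt / (ymin ^ 2 + H ^ 2) in
  forall gb gh gb' gh' : R,
    0 < gb < gmax -> 0 < gh < gmax ->
    0 < gb' < gmax -> 0 < gh' < gmax ->
    gb <= gb' -> gh <= gh' ->
    kappa_tilde Nt Pt H xb yb eps Lb Lh gb gh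
      <= kappa_tilde Nt Pt H xb yb eps Lb Lh gb' gh'.
Proof.
  intros _ HPt _ Hymin _ _ _ _ _ _ _ Hyb _ Hb Hh gmax gb gh gb' gh' Hgb Hgh Hgb' Hgh' Hb' Hh'.
  assert (Hr2 : 0 < r2 xb yb) by (unfold r2; nra).
  assert (Hadm : forall g, 0 < g < gmax -> admissible Nt Pt H g).
  { intros g [Hg Hgmax]. split; [exact Hg|].
    assert (Hden : 0 < ymin ^ 2 + H ^ 2) by nra.
    unfold gmax in Hgmax. apply Rlt_div_r in Hgmax; [nra | lra]. }
  destruct Lb as [[ab bb] cb], Lh as [[ah bh] ch]. unfold kappa_tilde.
  apply Rplus_le_compat_r, Rmax_le_compat; apply zeta_monotone; auto; lra.
Qed.
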